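(* Let $ABC$ be a triangle and let $X, Y$ be points which are conjugate with respect to the circumcircle $\odot(ABC)$. Let $X', Y'$ be the isogonal conjugates of $X, Y$ with respect to $ABC$. Then the line $X'Y'$ passes through the center of the circumconic through $A, B, C, X', Y'$.
   Context: Two points $U, V$ are conjugate with respect to a conic $\mathcal{C}$ if the polar of $U$ with respect to $\mathcal{C}$ passes through $V$ (equivalently, the polar of $V$ passes through $U$). *)

From HB Require Import structures.
From mathcomp Require Import all_boot all_order all_algebra.
Set Implicit Arguments. Unset Strict Implicit. Unset Printing Implicit Defensive.
Import Order.TTheory GRing.Theory Num.Theory.
Local Open Scope ring_scope.

Section Plane.
Variable R : rcfType.
Definition point := (R * R)%type.

Definition vsub (P Q : point) : point := (P.1 - Q.1, P.2 - Q.2).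
Definition vadd (P Q : point) : point := (P.1 + Q.1, P.2 + Q.2).
Definition vscale (k : R) (P : point) : point := (k * P.1, k * P.2).
Definition dot (P Q : point) : R := P.1 * Q.1 + P.2 * Q.2.
Definition cross (P Q : point) : R := P.1 * Q.2 - P.2 * Q.1.
Definition vnorm (P : point) : R := Num.sqrt (dot P P).

Definition collinear (P Q S : point) : Prop := cross (vsub Q P) (vsub S P) = 0.

Definition circumcenter (A B C O : point) : Prop :=
  dot (vsub A O) (vsub A O) = dot (vsub B O) (vsub B O) /\
  dot (vsub A O) (vsub A O) = dot (vsub C O) (vsub C O).

(* P lies on the polar of U w.r.t. the circle with center O and squared radius r2 *)
Definition on_polar (O : point) (r2 : R) (U P : point) : Prop :=
  dot (vsub P O) (vsub U O) = r2.

Definition conjugate_wrt_circle (O : point) (r2 : R) (U V : point) : Prop :=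
  on_polar O r2 U V.

Definition bisector_dir (V Q1 Q2 : point) : point :=
  vadd (vscale (vnorm (vsub Q1 V))^-1 (vsub Q1 V))
       (vscale (vnorm (vsub Q2 V))^-1 (vsub Q2 V)).

Definition reflect_dir (u v : point) : point :=
  vsub (vscale (2 * dot v u / dot u u) u) v.

Definition on_isogonal_line (V Q1 Q2 X P : point) : Prop :=
  cross (vsub P V) (reflect_dir (bisector_dir V Q1 Q2) (vsub X V)) = 0.

Definition isogonal_conjugate (A B C X X' : point) : Prop :=
  on_isogonal_line A B C X X' /\ on_isogonal_line B C A X X' /\
  on_isogonal_line C A B X X'.

Record conic := Conic { ca : R; cb : R; cc : R; cd : R; ce : R; cf : R }.
Definition nondeg_coeffs (Q : conic) : Prop :=
  ~ (ca Q = 0 /\ cb Q = 0 /\ cc Q = 0 /\ cd Q = 0 /\ ce Q = 0 /\ cf Q = 0).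
Definition on_conic (Q : conic) (P : point) : Prop :=
  ca Q * P.1 ^+ 2 + cb Q * P.1 * P.2 + cc Q * P.2 ^+ 2 + cd Q * P.1 + ce Q * P.2
  + cf Q = 0.

(* Projective points of the plane: homogeneous triples (z1 : z2 : z3), not all 0;
   z3 = 0 are the points at infinity. *)
Definition hpoint := (R * R * R)%type.
Definition hnonzero (Z : hpoint) : Prop := ~ (Z.1.1 = 0 /\ Z.1.2 = 0 /\ Z.2 = 0).

(* Z is a center of Q: the pole of the line at infinity, i.e. with symmetric
   matrix M = [[2a,b,d],[b,2c,e],[d,e,2f]], M Z is proportional to (0,0,1). *)
Definition conic_center (Q : conic) (Z : hpoint) : Prop :=
  hnonzero Z /\
  2 * ca Q * Z.1.1 + cb Q * Z.1.2 + cd Q * Z.2 = 0 /\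
  cb Q * Z.1.1 + 2 * cc Q * Z.1.2 + ce Q * Z.2 = 0.

Definition on_line_h (P P' : point) (Z : hpoint) : Prop :=
  Z.1.1 * (P.2 - P'.2) - Z.1.2 * (P.1 - P'.1) + Z.2 * (P.1 * P'.2 - P'.1 * P.2) = 0.

End Plane.

From HB Require Import structures.
From mathcomp Require Import all_boot all_order all_algebra.
From mathcomp Require Import ring lra.
Import Order.TTheory GRing.Theory Num.Theory.
Local Open Scope ring_scope.

Set Implicit Arguments. Unset Strict Implicit. Unset Printing Implicit Defensive.

(* Work in barycentric coordinates (x : y : z) w.r.t. ABC and let s = (a^2, b^2, c^2).
   The circumcircle is a^2 yz + b^2 zx + c^2 xy = 0, so X and Y are conjugate iff the
   polar form of this quadric vanishes at (x, y), and isogonal conjugation is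
   (x : y : z) |-> (a^2 yz : b^2 zx : c^2 xy).  A circumconic p yz + q zx + r xy = 0 is the
   isogonal image of the line b^2 c^2 p x + c^2 a^2 q y + a^2 b^2 r z = 0; as it passes
   through X' and Y', this line is XY, so (p, q, r) is proportional to
   (a^2 n1, b^2 n2, c^2 n3) with n = X x Y.  The center of the circumconic is
   (p (q + r - p) : q (r + p - q) : r (p + q - r)), and after this substitution the
   determinant of the center, X' and Y' factors through the polar form of the
   circumcircle at (X, Y), hence vanishes.  The center fails to be unique only when the
   circumconic is a pair of parallel lines, i.e. when XY is the tangent to the
   circumcircle at a vertex, and two points of such a tangent are never conjugate. *)

Notation vec3 F := (F * F * F)%type.

Section Vec3.
Variable F : comPzRingType.
Implicit Types (t : F) (a b c m s u v w x y z : vec3 F).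

Definition dot3 u v := u.1.1 * v.1.1 + u.1.2 * v.1.2 + u.2 * v.2.
Definition cross3 u v : vec3 F :=
  (u.1.2 * v.2 - u.2 * v.1.2, u.2 * v.1.1 - u.1.1 * v.2, u.1.1 * v.1.2 - u.1.2 * v.1.1).
Definition det3 u v w := dot3 u (cross3 v w).
Definition sum3 u := u.1.1 + u.1.2 + u.2.
Definition prod3 u := u.1.1 * u.1.2 * u.2.
Definition scale3 t u : vec3 F := (t * u.1.1, t * u.1.2, t * u.2).
Definition rot3 u : vec3 F := (u.1.2, u.2, u.1.1).
Definition cof3 u : vec3 F := (u.1.2 * u.2, u.2 * u.1.1, u.1.1 * u.1.2).

(* Coordinates of [u] in the basis [a, b, c], multiplied by [det3 a b c]. *)
Definition bary3 a b c u : vec3 F := (det3 u b c, det3 u c a, det3 u a b).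

(* The circumconic [m.1.1 y z + m.1.2 z x + m.2 x y = 0] in barycentric coordinates;
   [ccmul m] is its symmetric matrix. *)
Definition ccmul m z : vec3 F :=
  (m.2 * z.1.2 + m.1.2 * z.2, m.2 * z.1.1 + m.1.1 * z.2, m.1.2 * z.1.1 + m.1.1 * z.1.2).
Definition ccform m x y := dot3 x (ccmul m y).

(* [z] is a center: its polar is the line at infinity [x + y + z = 0]. *)
Definition is_cc_center m z :=
  (ccmul m z).1.1 = (ccmul m z).1.2 /\ (ccmul m z).1.2 = (ccmul m z).2.

(* The adjugate of [ccmul m] applied to (1, 1, 1). *)
Definition cc_center m : vec3 F :=
  (m.1.1 * (m.1.2 + m.2 - m.1.1), m.1.2 * (m.2 + m.1.1 - m.1.2),
   m.2 * (m.1.1 + m.1.2 - m.2)).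

(* Isogonal conjugation [(x : y : z) |-> (a^2 / x : b^2 / y : c^2 / z)], with [s] the
   squared side lengths. *)
Definition isog s x : vec3 F := s * cof3 x.

Ltac vec3_ring := rewrite /bary3 /det3 /ccform /isog /cc_center /ccmul /dot3 /cross3
  /sum3 /prod3 /scale3 /rot3 /cof3 /=; ring.

Lemma dot3r0 u : dot3 u 0 = 0.
Proof. by rewrite /dot3 /= !mulr0 !addr0. Qed.

Lemma det3Z z u v t t' : det3 z (scale3 t u) (scale3 t' v) = t * t' * det3 z u v.
Proof. case: z u v => [[? ?] ?] [[? ?] ?] [[? ?] ?]; vec3_ring. Qed.

Lemma det3Zl t u v w : det3 (scale3 t u) v w = t * det3 u v w.
Proof. case: u v w => [[? ?] ?] [[? ?] ?] [[? ?] ?]; vec3_ring. Qed.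

Lemma sum3Z t u : sum3 (scale3 t u) = t * sum3 u.
Proof. case: u => [[? ?] ?]; vec3_ring. Qed.

Lemma ccformZ m u v t t' : ccform m (scale3 t u) (scale3 t' v) = t * t' * ccform m u v.
Proof. case: m u v => [[? ?] ?] [[? ?] ?] [[? ?] ?]; vec3_ring. Qed.

Lemma ccformZr m u v t : ccform m u (scale3 t v) = t * ccform m u v.
Proof. case: m u v => [[? ?] ?] [[? ?] ?] [[? ?] ?]; vec3_ring. Qed.

Lemma ccformZl m u v t : ccform (scale3 t m) u v = t * ccform m u v.
Proof. case: m u v => [[? ?] ?] [[? ?] ?] [[? ?] ?]; vec3_ring. Qed.

Lemma cc_centerZ m t : cc_center (scale3 t m) = scale3 (t ^+ 2) (cc_center m).
Proof. case: m => [[? ?] ?]; rewrite /cc_center /scale3 /=; congr (_, _, _); ring. Qed.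

Lemma cross3_rot u v : cross3 (rot3 u) (rot3 v) = rot3 (cross3 u v).
Proof. by []. Qed.

Lemma prod3_rot u : prod3 (rot3 u) = prod3 u.
Proof. case: u => [[? ?] ?]; vec3_ring. Qed.

Lemma ccform_rot m x y : ccform (rot3 m) (rot3 x) (rot3 y) = ccform m x y.
Proof. case: m x y => [[? ?] ?] [[? ?] ?] [[? ?] ?]; vec3_ring. Qed.

Lemma det3_bary3 a b c u v w :
  det3 (bary3 a b c u) (bary3 a b c v) (bary3 a b c w) = det3 a b c ^+ 2 * det3 u v w.
Proof.
case: a b c u v w => [[? ?] ?] [[? ?] ?] [[? ?] ?] [[? ?] ?] [[? ?] ?] [[? ?] ?]; vec3_ring.
Qed.

Lemma ccform_isog_self m s x :
  ccform m (isog s x) (isog s x) = 2 * prod3 x * dot3 x (m * cof3 s).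
Proof. case: m s x => [[? ?] ?] [[? ?] ?] [[? ?] ?]; vec3_ring. Qed.

Lemma ccform_self s x : ccform s x x = 2 * sum3 (isog s x).
Proof. case: s x => [[? ?] ?] [[? ?] ?]; vec3_ring. Qed.

Lemma det3_cc_center_isog s x y t :
  det3 (cc_center (scale3 t (s * cross3 x y))) (isog s x) (isog s y)
  = t ^+ 2 * prod3 s * prod3 (cross3 x y) * ccform s x y.
Proof. case: s x y => [[? ?] ?] [[? ?] ?] [[? ?] ?]; vec3_ring. Qed.

Lemma cross3_orth u v z :
  dot3 u z = 0 -> dot3 v z = 0 -> cross3 (cross3 u v) z = 0.
Proof.
have -> : cross3 (cross3 u v) z = (dot3 u z * v.1.1 - dot3 v z * u.1.1,
    dot3 u z * v.1.2 - dot3 v z * u.1.2, dot3 u z * v.2 - dot3 v z * u.2).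
  by case: u v z => [[? ?] ?] [[? ?] ?] [[? ?] ?]; rewrite /dot3 /cross3 /=; congr (_, _, _); ring.
by move=> -> ->; rewrite !mul0r subr0.
Qed.

End Vec3.

Section Circumconic.
Variable F : fieldType.
Implicit Types (t : F) (m s u v w x y z : vec3 F).

Lemma vec3_eq0 u : (u == 0) = [&& u.1.1 == 0, u.1.2 == 0 & u.2 == 0].
Proof. by case: u => [[a b] c]; rewrite /= !xpair_eqE andbA. Qed.

Lemma scale3_eq0 t u : (scale3 t u == 0) = (t == 0) || (u == 0).
Proof.
rewrite !vec3_eq0 /= !mulf_eq0.
by case: (t == 0); rewrite //= -[LHS]/[&& _, _ & _].
Qed.

Lemma rot3_eq0 u : (rot3 u == 0) = (u == 0).
Proof. by case: u => [[a b] c]; rewrite !vec3_eq0 /= [RHS]andbC andbA. Qed.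

Lemma prod3_eq0 u : (prod3 u == 0) = [|| u.1.1 == 0, u.1.2 == 0 | u.2 == 0].
Proof. by rewrite /prod3 !mulf_eq0 orbA. Qed.

Lemma prod3_neq0 u : prod3 u != 0 -> u != 0.
Proof. by apply: contraNneq => ->; rewrite /prod3 /= !mul0r. Qed.

Lemma cross3_eq0_scale3 w z : cross3 w z = 0 -> w != 0 -> exists t, z = scale3 t w.
Proof.
have solve (a b c d : F) : c != 0 -> c * a = d * b -> a = b / c * d.
  by move=> c0 e; apply: (mulfI c0); rewrite e; field.
case: w z => [[w1 w2] w3] [[z1 z2] z3] [/subr0_eq e1 /subr0_eq e2 /subr0_eq e3].
rewrite vec3_eq0 /=; have [w1_0 /=|w1_0 _] := eqVneq w1 0.
  have [w2_0 /= w3_0|w2_0 _] := eqVneq w2 0.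
    by exists (z3 / w3); congr (_, _, _); apply: solve.
  by exists (z2 / w2); congr (_, _, _); apply: solve.
by exists (z1 / w1); congr (_, _, _); apply: solve.
Qed.

Lemma mul_cof3_scale3 m s w t :
  prod3 s != 0 -> m * cof3 s = scale3 t w -> m = scale3 (t / prod3 s) (s * w).
Proof.
case: m s w => [[m1 m2] m3] [[s1 s2] s3] [[w1 w2] w3].
rewrite prod3_eq0 !negb_or /= => /and3P[s1_0 s2_0 s3_0] [e1 e2 e3].
rewrite /scale3 /prod3 /=; congr (_, _, _).
- by rewrite -[m1](mulfK (mulf_neq0 s2_0 s3_0)) e1; field; rewrite s1_0 s2_0 s3_0.
- by rewrite -[m2](mulfK (mulf_neq0 s3_0 s1_0)) e2; field; rewrite s1_0 s2_0 s3_0.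
- by rewrite -[m3](mulfK (mulf_neq0 s1_0 s2_0)) e3; field; rewrite s1_0 s2_0 s3_0.
Qed.

Lemma isog_of_ratios s x x' :
  prod3 s != 0 -> prod3 x != 0 ->
  x'.2 * x.2 * s.1.1 = x'.1.1 * x.1.1 * s.2 -> x'.1.1 * x.1.1 * s.1.2 = x'.1.2 * x.1.2 * s.1.1 ->
  exists t, x' = scale3 t (isog s x).
Proof.
case: s x x' => [[s1 s2] s3] [[x1 x2] x3] [[x1' x2'] x3'].
rewrite !prod3_eq0 !negb_or /= => /and3P[s1_0 s2_0 s3_0] /and3P[x1_0 x2_0 x3_0] e3 e2.
exists (x1' / (s1 * (x2 * x3))); rewrite /scale3 /=; congr (_, _, _).
- by field; rewrite s1_0 x2_0 x3_0.
- by apply: (mulIf (mulf_neq0 x2_0 s1_0)); rewrite mulrA -e2; field; rewrite s1_0 x2_0 x3_0.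
- by apply: (mulIf (mulf_neq0 x3_0 s1_0)); rewrite mulrA e3; field; rewrite s1_0 x2_0 x3_0.
Qed.

Lemma det3_is_cc_center m z u v :
  is_cc_center m z -> cc_center m != 0 -> det3 (cc_center m) u v = 0 -> det3 z u v = 0.
Proof.
case: m => [[p q] r] [e1 e2] m0 hm.
(* [cc_center m] is the cross product of differences of rows of [ccmul m], and the center
   equations say that [z] is orthogonal to both. *)
have : cross3 (cross3 (- r, r, q - p) (r - q, - p, p)) z = 0.
  apply: cross3_orth; [rewrite -(subrr (ccmul (p, q, r) z).1.2) -{1}e1
                      | rewrite -(subrr (ccmul (p, q, r) z).2) -{1}e2];
  by case: z {e1 e2} => [[? ?] ?]; rewrite /dot3 /ccmul /=; ring.
have -> : cross3 (- r, r, q - p) (r - q, - p, p) = cc_center (p, q, r).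
  by rewrite /cross3 /cc_center /=; congr (_, _, _); ring.
by move=> /cross3_eq0_scale3 /(_ m0) [t ->]; rewrite det3Zl hm mulr0.
Qed.

Hypothesis two_neq0 : 2 != 0 :> F.

Lemma cc_center_eq0 m : m != 0 -> cc_center m = 0 ->
  [\/ m.2 = 0 /\ m.1.1 = m.1.2, m.1.1 = 0 /\ m.1.2 = m.2 | m.1.2 = 0 /\ m.2 = m.1.1].
Proof.
case: m => [[p q] r]; rewrite vec3_eq0 /= => m0 [/eqP e1 /eqP e2 /eqP e3].
move: e1 e2 e3; rewrite !mulf_eq0 !subr_eq0.
have [p0 _|p0 /= /eqP qrp] := eqVneq p 0.
  rewrite p0 addr0 add0r; have [q0 _|q0 /= /eqP rq _] := eqVneq q 0; last by constructor 2.
  by rewrite q0 eq_sym orbb => /eqP r0; move: m0; rewrite p0 q0 r0 eqxx.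
have [q0 _ _|q0 /= /eqP rpq _] := eqVneq q 0; first by constructor 3; rewrite -qrp q0 add0r.
have r2 : 2 * r = 0.
  have -> : 2 * r = r + (q + r) - q by ring.
  by rewrite qrp rpq subrr.
have r0 : r = 0 by move/eqP: r2; rewrite mulf_eq0 (negPf two_neq0) => /eqP.
by constructor 1; rewrite -qrp r0 addr0.
Qed.

(* The two conditions on [s * cross3 x y] say that the line XY is the tangent to the
   circumcircle at the third vertex. *)
Lemma conjugate_not_on_vertex_tangent s x y :
  prod3 s != 0 -> prod3 x != 0 -> prod3 y != 0 -> cross3 x y != 0 -> ccform s x y = 0 ->
  (s * cross3 x y).2 = 0 -> (s * cross3 x y).1.1 = (s * cross3 x y).1.2 -> False.
Proof.
case: s x y => [[s1 s2] s3] [[x1 x2] x3] [[y1 y2] y3].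
rewrite !prod3_eq0 vec3_eq0 /= !negb_or.
move=> /and3P[s1_0 s2_0 s3_0] /and3P[x1_0 _ _] /and3P[_ y2_0 _] n0 hc /eqP.
rewrite mulf_eq0 (negPf s3_0) /= => /eqP n3 hn.
set n1 := x2 * y3 - x3 * y2 in n0 hn; set n2 := x3 * y1 - x1 * y3 in n0 hn.
have n2_0 : n2 != 0.
  apply: contra n0 => /eqP n2_0; move/eqP: hn; rewrite n2_0 mulr0 mulf_eq0 (negPf s1_0).
  by rewrite /= n3 !eqxx => ->.
have ex : (s1 * x2 + s2 * x1) * n2 = - s1 * x3 * (x1 * y2 - x2 * y1) - x1 * (s1 * n1 - s2 * n2).
  by rewrite /n1 /n2; ring.
have ey : (s1 * y2 + s2 * y1) * n2 = - s1 * y3 * (x1 * y2 - x2 * y1) - y1 * (s1 * n1 - s2 * n2).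
  by rewrite /n1 /n2; ring.
rewrite n3 hn subrr !mulr0 subr0 in ex ey.
move/eqP: ex; rewrite mulf_eq0 (negPf n2_0) orbF => /eqP ax.
move/eqP: ey; rewrite mulf_eq0 (negPf n2_0) orbF => /eqP ay.
have : ccform (s1, s2, s3) (x1, x2, x3) (y1, y2, y3)
    = y3 * (s1 * x2 + s2 * x1) + x3 * (s1 * y2 + s2 * y1)
      + s3 * (2 * x1 * y2 - (x1 * y2 - x2 * y1)).
  by rewrite /ccform /ccmul /dot3 /=; ring.
rewrite hc ax ay n3 !mulr0 !add0r subr0 => /esym/eqP.
by rewrite !mulf_eq0 (negPf two_neq0) (negPf s3_0) (negPf x1_0) (negPf y2_0).
Qed.

Lemma isog_cross3_neq0 s x y :
  ccform s x y = 0 -> prod3 x != 0 -> prod3 y != 0 -> sum3 (isog s x) != 0 -> cross3 x y != 0.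
Proof.
move=> hc /prod3_neq0 x0 /prod3_neq0 y0 hx; apply/eqP => /cross3_eq0_scale3 /(_ x0) [t yE].
move: hc; rewrite yE ccformZr ccform_self => /eqP.
rewrite !mulf_eq0 (negPf two_neq0) (negPf hx) /= orbF => /eqP t0.
by move: y0; rewrite yE t0 scale3_eq0 eqxx.
Qed.

Lemma cc_center_isog_neq0 s x y :
  prod3 s != 0 -> prod3 x != 0 -> prod3 y != 0 -> cross3 x y != 0 -> ccform s x y = 0 ->
  cc_center (s * cross3 x y) != 0.
Proof.
move=> s0 x0 y0 n0 hc.
have w0 : s * cross3 x y != 0.
  move: n0; apply: contraNN; move: s0; rewrite prod3_eq0 !negb_or !vec3_eq0 /= !mulf_eq0.
  by case/and3P=> /negPf-> /negPf-> /negPf-> /=.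
apply/eqP => /(cc_center_eq0 w0) [] [].
- exact: conjugate_not_on_vertex_tangent s0 x0 y0 n0 hc.
- by apply: (@conjugate_not_on_vertex_tangent (rot3 s) (rot3 x) (rot3 y));
    rewrite ?prod3_rot ?ccform_rot ?cross3_rot ?rot3_eq0.
- by apply: (@conjugate_not_on_vertex_tangent (rot3 (rot3 s)) (rot3 (rot3 x)) (rot3 (rot3 y)));
    rewrite ?prod3_rot ?ccform_rot ?cross3_rot ?rot3_eq0.
Qed.

Lemma det3_isog_cc_center s x y m z :
  prod3 s != 0 -> prod3 x != 0 -> prod3 y != 0 -> sum3 (isog s x) != 0 ->
  ccform s x y = 0 -> m != 0 ->
  ccform m (isog s x) (isog s x) = 0 -> ccform m (isog s y) (isog s y) = 0 ->
  is_cc_center m z -> det3 z (isog s x) (isog s y) = 0.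
Proof.
move=> s0 x0 y0 hx hc m0 mx my hz.
have n0 := isog_cross3_neq0 hc x0 y0 hx.
have on_line u : prod3 u != 0 -> ccform m (isog s u) (isog s u) = 0 -> dot3 u (m * cof3 s) = 0.
  move=> u0; rewrite ccform_isog_self => /eqP.
  by rewrite 2!mulf_eq0 (negPf two_neq0) (negPf u0) /= => /eqP.
have [t mE] : exists t, m = scale3 t (s * cross3 x y).
  have /cross3_eq0_scale3 /(_ n0) [t' mcE] := cross3_orth (on_line x x0 mx) (on_line y y0 my).
  by exists (t' / prod3 s); apply: mul_cof3_scale3.
have t0 : t != 0.
  by apply: contraNneq m0 => t0; rewrite mE scale3_eq0 t0 eqxx.
apply: (det3_is_cc_center hz).
  by rewrite mE cc_centerZ scale3_eq0 negb_or expf_neq0 // cc_center_isog_neq0.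
by rewrite mE det3_cc_center_isog hc mulr0.
Qed.

Lemma det3_isogZ_cc_center s x y x' y' m z t t' :
  prod3 s != 0 -> prod3 x != 0 -> prod3 y != 0 -> ccform s x y = 0 ->
  x' = scale3 t (isog s x) -> y' = scale3 t' (isog s y) -> sum3 x' != 0 -> sum3 y' != 0 ->
  m != 0 -> ccform m x' x' = 0 -> ccform m y' y' = 0 -> is_cc_center m z ->
  det3 z x' y' = 0.
Proof.
move=> s0 x0 y0 hc -> ->; rewrite !sum3Z !mulf_eq0 !negb_or.
move=> /andP[t0 hx] /andP[t'0 _] m0; rewrite !ccformZ => /eqP mx /eqP my hz.
rewrite det3Z (det3_isog_cc_center s0 x0 y0 hx hc m0 _ _ hz) ?mulr0 //; apply/eqP.
  by move: mx; rewrite !mulf_eq0 (negPf t0).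
by move: my; rewrite !mulf_eq0 (negPf t'0).
Qed.

End Circumconic.

Section Plane.
Variable R : rcfType.
Implicit Types (u v x : point R).

Lemma dot_ge0 u : 0 <= dot u u.
Proof. by rewrite /dot addr_ge0 // -expr2 sqr_ge0. Qed.

Lemma vnorm_sqr u : vnorm u ^+ 2 = dot u u.
Proof. by rewrite sqr_sqrtr // dot_ge0. Qed.

Lemma lagrange_identity u v : dot u u * dot v v = dot u v ^+ 2 + cross u v ^+ 2.
Proof. by rewrite /dot /cross; ring. Qed.

Lemma normr_dot_lt u v : cross u v != 0 -> `|dot u v| < vnorm u * vnorm v.
Proof.
move=> uv0; rewrite -ltr_sqr ?nnegrE ?mulr_ge0 ?sqrtr_ge0 // exprMn !vnorm_sqr.
by rewrite lagrange_identity real_normK ?num_real // ltrDl lt_def sqr_ge0 sqrf_eq0 andbT.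
Qed.

Lemma vnorm_mul_neq0 u v : cross u v != 0 -> vnorm u * vnorm v != 0.
Proof. by move/normr_dot_lt; apply: contraTneq => ->; rewrite -leNgt normr_ge0. Qed.

Definition hom (P : point R) : vec3 R := (P.1, P.2, 1).
Definition bary (A B C : point R) : vec3 R -> vec3 R := bary3 (hom A) (hom B) (hom C).
Definition dist2 (P Q : point R) := dot (vsub P Q) (vsub P Q).
Definition sides (A B C : point R) : vec3 R := (dist2 B C, dist2 C A, dist2 A B).

Lemma det3_hom (P Q S : point R) : det3 (hom P) (hom Q) (hom S) = cross (vsub Q P) (vsub S P).
Proof. by rewrite /det3 /dot3 /cross3 /cross /vsub /=; ring. Qed.

Lemma collinear_rot (A B C : point R) : collinear A B C -> collinear B C A.
Proof. by rewrite /collinear -!det3_hom => <-; rewrite !det3_hom /cross /vsub /=; ring. Qed.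

Lemma sum3_bary_neq0 A B C P : ~ collinear A B C -> sum3 (bary A B C (hom P)) != 0.
Proof.
rewrite /collinear -det3_hom (_ : sum3 _ = det3 (hom A) (hom B) (hom C)) => [/eqP //|].
by rewrite /sum3 /bary /bary3 /det3 /dot3 /cross3 /=; ring.
Qed.

Lemma prod3_bary_neq0 A B C X :
  ~ collinear X B C -> ~ collinear X C A -> ~ collinear X A B -> prod3 (bary A B C (hom X)) != 0.
Proof. by rewrite /collinear -!det3_hom => /eqP ? /eqP ? /eqP ?; rewrite !mulf_neq0. Qed.

Lemma prod3_sides_neq0 A B C : ~ collinear A B C -> prod3 (sides A B C) != 0.
Proof.
rewrite /collinear => /eqP h.
have side u v : cross u v != 0 -> dot u u != 0.
  move/vnorm_mul_neq0; apply: contraNneq; rewrite -vnorm_sqr => /eqP.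
  by rewrite sqrf_eq0 => /eqP ->; rewrite mul0r.
rewrite /prod3 /sides /dist2 /= !mulf_neq0 //.
- apply: (side _ (vsub B A)); rewrite (_ : cross _ _ = cross (vsub B A) (vsub C A)) //.
  by rewrite /cross /vsub /=; ring.
- apply: (side _ (vsub A B)); rewrite (_ : cross _ _ = cross (vsub B A) (vsub C A)) //.
  by rewrite /cross /vsub /=; ring.
- apply: (side _ (vsub A C)); rewrite (_ : cross _ _ = cross (vsub B A) (vsub C A)) //.
  by rewrite /cross /vsub /=; ring.
Qed.

Lemma on_line_h_bary A B C P P' Z : ~ collinear A B C ->
  det3 (bary A B C Z) (bary A B C (hom P)) (bary A B C (hom P')) = 0 -> on_line_h P P' Z.
Proof.
rewrite /collinear -det3_hom => /eqP D0; rewrite /bary det3_bary3 => /eqP.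
rewrite mulf_eq0 expf_eq0 (negPf D0) andbF /= => /eqP.
by rewrite /on_line_h /det3 /dot3 /cross3 /=; move=> <-; ring.
Qed.

(* Complex multiplication [x |-> b c conj(x)]: the reflection in the bisector of the
   directions [b] and [c], scaled by [|b| |c|]. *)
Definition isog_dir (b c x : point R) : point R :=
  ((b.1 * c.1 - b.2 * c.2) * x.1 + (b.1 * c.2 + b.2 * c.1) * x.2,
   (b.1 * c.2 + b.2 * c.1) * x.1 - (b.1 * c.1 - b.2 * c.2) * x.2).

Lemma reflect_dirZ k u x : k != 0 -> reflect_dir (vscale k u) x = reflect_dir u x.
Proof.
move=> k0; case: u x => [u1 u2] [x1 x2]; rewrite /reflect_dir /vsub /vscale /dot /=.
have -> : k * u1 * (k * u1) + k * u2 * (k * u2) = k ^+ 2 * (u1 * u1 + u2 * u2) by ring.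
have [u0|u0] := eqVneq (u1 * u1 + u2 * u2) 0.
  by rewrite u0 mulr0 !invr0 !mulr0 !mul0r.
by congr (_, _); field; rewrite u0 k0.
Qed.

Lemma reflect_bisector_dir V Q1 Q2 x : ~ collinear V Q1 Q2 ->
  reflect_dir (bisector_dir V Q1 Q2) x
  = vscale (vnorm (vsub Q1 V) * vnorm (vsub Q2 V))^-1 (isog_dir (vsub Q1 V) (vsub Q2 V) x).
Proof.
rewrite /collinear /bisector_dir; move: (vsub Q1 V) (vsub Q2 V) => b c /eqP bc0.
have := normr_dot_lt bc0; have := vnorm_sqr b; have := vnorm_sqr c.
set nb := vnorm b; set nc := vnorm c; move=> nc2 nb2 hlt.
have k0 : nb * nc + dot b c != 0.
  by rewrite gt_eqF // -ltrBlDr sub0r; apply: le_lt_trans hlt; rewrite -normrN ler_norm.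
have nbc0 := vnorm_mul_neq0 bc0.
have [nb0 nc0] : nb != 0 /\ nc != 0 by move: nbc0; rewrite mulf_eq0 negb_or => /andP.
(* The bisector is spanned by [U = |c| b + |b| c], with [U . U = 2 |b| |c| (|b| |c| + b . c)]. *)
rewrite (_ : vadd _ _ = vscale (nb * nc)^-1 (nc * b.1 + nb * c.1, nc * b.2 + nb * c.2)); last first.
  by rewrite /vadd /vscale /=; congr (_, _); field; rewrite nb0 nc0.
rewrite reflect_dirZ ?invr_neq0 // /reflect_dir /vsub /vscale /isog_dir /=.
move: k0; rewrite /dot /= in nb2 nc2 * => k0.
set k := nb * nc + _ in k0.
set xU := x.1 * _ + x.2 * _.
have -> : (nc * b.1 + nb * c.1) * (nc * b.1 + nb * c.1)
          + (nc * b.2 + nb * c.2) * (nc * b.2 + nb * c.2)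
    = 2 * (nb * nc) * k by rewrite /k; ring: nb2 nc2.
have e1 : xU * (nc * b.1 + nb * c.1) - nb * nc * k * x.1
    = k * ((b.1 * c.1 - b.2 * c.2) * x.1 + (b.1 * c.2 + b.2 * c.1) * x.2).
  by rewrite /xU /k; ring: nb2 nc2.
have e2 : xU * (nc * b.2 + nb * c.2) - nb * nc * k * x.2
    = k * ((b.1 * c.2 + b.2 * c.1) * x.1 - (b.1 * c.1 - b.2 * c.2) * x.2).
  by rewrite /xU /k; ring: nb2 nc2.
congr (_, _); [rewrite -[_ * x.1 + _](mulKf k0) -e1 | rewrite -[_ * x.1 - _](mulKf k0) -e2];
  by field; rewrite nb0 nc0 k0 ?pnatr_eq0.
Qed.

Lemma isogonal_line_cross V Q1 Q2 X P : ~ collinear V Q1 Q2 -> on_isogonal_line V Q1 Q2 X P ->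
  cross (vsub P V) (isog_dir (vsub Q1 V) (vsub Q2 V) (vsub X V)) = 0.
Proof.
move=> h; rewrite /on_isogonal_line reflect_bisector_dir //.
have -> k u v : cross u (vscale k v) = k * cross u v by rewrite /cross /vscale /=; ring.
move/eqP; rewrite mulf_eq0 invr_eq0 (negPf (vnorm_mul_neq0 _)) /=; last exact/eqP.
by move/eqP.
Qed.

Lemma isogonal_line_bary A B C X P : ~ collinear A B C -> on_isogonal_line A B C X P ->
  (bary A B C (hom P)).1.2 * (bary A B C (hom X)).1.2 * (sides A B C).2
  = (bary A B C (hom P)).2 * (bary A B C (hom X)).2 * (sides A B C).1.2.
Proof.
move=> h /(isogonal_line_cross h) e; apply: subr0_eq.
rewrite -(mulr0 (det3 (hom A) (hom B) (hom C))) -e.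
by rewrite /bary /bary3 /sides /dist2 /det3 /dot3 /cross3 /cross /isog_dir /dot /vsub /=; ring.
Qed.

Lemma isogonal_conjugate_bary A B C X X' :
  ~ collinear A B C -> prod3 (bary A B C (hom X)) != 0 -> isogonal_conjugate A B C X X' ->
  exists t, bary A B C (hom X') = scale3 t (isog (sides A B C) (bary A B C (hom X))).
Proof.
move=> h x0 [_ [hB hC]].
have hBCA : ~ collinear B C A by move=> /collinear_rot /collinear_rot.
have hCAB : ~ collinear C A B by move=> /collinear_rot.
exact: (isog_of_ratios (x' := bary A B C (hom X')) (prod3_sides_neq0 h) x0
  (isogonal_line_bary hBCA hB) (isogonal_line_bary hCAB hC)).
Qed.

Definition cmul (Q : conic R) (U : vec3 R) : vec3 R :=
  (2 * ca Q * U.1.1 + cb Q * U.1.2 + cd Q * U.2,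
   cb Q * U.1.1 + 2 * cc Q * U.1.2 + ce Q * U.2,
   cd Q * U.1.1 + ce Q * U.1.2 + 2 * cf Q * U.2).
Definition cform Q U V := dot3 U (cmul Q V).

Definition circum_coef Q (A B C : point R) : vec3 R :=
  (cform Q (hom B) (hom C), cform Q (hom C) (hom A), cform Q (hom A) (hom B)).

Lemma on_conicE Q P : on_conic Q P <-> cform Q (hom P) (hom P) = 0.
Proof.
rewrite /on_conic; set e := (X in X = 0).
have -> : cform Q (hom P) (hom P) = 2 * e by rewrite /e /cform /cmul /dot3 /=; ring.
split=> [-> | /eqP]; first by rewrite mulr0.
by rewrite mulf_eq0 pnatr_eq0 /= => /eqP.
Qed.

Lemma cform_vertices_eq0 Q A B C : on_conic Q A -> on_conic Q B -> on_conic Q C ->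
  (cform Q (hom A) (hom A), cform Q (hom B) (hom B), cform Q (hom C) (hom C)) = 0.
Proof. by move=> /on_conicE -> /on_conicE -> /on_conicE ->. Qed.

Lemma cform_bary Q A B C U V : on_conic Q A -> on_conic Q B -> on_conic Q C ->
  det3 (hom A) (hom B) (hom C) ^+ 2 * cform Q U V
  = ccform (circum_coef Q A B C) (bary A B C U) (bary A B C V).
Proof.
move=> hA hB hC; rewrite -[RHS]addr0 -(dot3r0 (bary A B C U * bary A B C V)).
rewrite -(cform_vertices_eq0 hA hB hC).
rewrite /ccform /circum_coef /cform /bary /bary3 /det3 /ccmul /cmul /dot3 /cross3 /hom /=.
ring.
Qed.

Lemma on_conic_bary Q A B C P : on_conic Q A -> on_conic Q B -> on_conic Q C ->
  on_conic Q P -> ccform (circum_coef Q A B C) (bary A B C (hom P)) (bary A B C (hom P)) = 0.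
Proof. by move=> hA hB hC /on_conicE hP; rewrite -cform_bary // hP mulr0. Qed.

Lemma ccmul_bary Q A B C U : on_conic Q A -> on_conic Q B -> on_conic Q C ->
  ccmul (circum_coef Q A B C) (bary A B C U)
  = scale3 (det3 (hom A) (hom B) (hom C)) (cform Q (hom A) U, cform Q (hom B) U, cform Q (hom C) U).
Proof.
move=> hA hB hC; rewrite -[LHS]addr0 -(mulr0 (bary A B C U)) -(cform_vertices_eq0 hA hB hC).
rewrite /circum_coef /cform /bary /bary3 /det3 /ccmul /scale3 /cmul /dot3 /cross3 /hom /=.
by congr (_, _, _); rewrite /=; ring.
Qed.

Lemma is_cc_center_bary Q A B C Z : on_conic Q A -> on_conic Q B -> on_conic Q C ->
  conic_center Q Z -> is_cc_center (circum_coef Q A B C) (bary A B C Z).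
Proof.
move=> hA hB hC [_ [c1 c2]].
have cZ P : cform Q (hom P) Z = (cmul Q Z).2.
  by rewrite /cform /dot3 /cmul /= c1 c2 !mulr0 !add0r mul1r.
by rewrite /is_cc_center ccmul_bary // !cZ.
Qed.

Lemma conic_coeffs_eq0 (Q : conic R) : (forall P, on_conic Q P) -> ~ nondeg_coeffs Q.
Proof.
move=> h; apply; move: (h (0, 0)) (h (1, 0)) (h (-1, 0)) (h (0, 1)) (h (0, -1)) (h (1, 1)).
clear h; rewrite /on_conic /= !expr2.
case: Q => a b c d e f /=; rewrite !(mulr0, mul0r, addr0, add0r, mulr1, mul1r, mulrN, mulNr, opprK).
by move=> *; split; [lra | split; [lra | split; [lra | split; lra]]].
Qed.

Lemma circum_coef_neq0 Q A B C : ~ collinear A B C -> nondeg_coeffs Q ->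
  on_conic Q A -> on_conic Q B -> on_conic Q C -> circum_coef Q A B C != 0.
Proof.
rewrite /collinear -det3_hom => /eqP D0 nd hA hB hC; apply/eqP => m0.
apply: (conic_coeffs_eq0 _ nd) => P; apply/on_conicE/eqP.
have := cform_bary (hom P) (hom P) hA hB hC; rewrite m0 => /eqP.
by rewrite (_ : ccform 0 _ _ = 0) ?mulf_eq0 ?expf_eq0 ?(negPf D0) // /ccform /ccmul /dot3 /=; ring.
Qed.

Definition circle (O : point R) r2 : conic R :=
  Conic 1 0 1 (-2 * O.1) (-2 * O.2) (O.1 ^+ 2 + O.2 ^+ 2 - r2).

Lemma cform_circle O r2 P P' :
  cform (circle O r2) (hom P) (hom P') = dist2 P O + dist2 P' O - dist2 P P' - 2 * r2.
Proof. by rewrite /cform /cmul /dot3 /dist2 /dot /vsub /=; ring. Qed.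

Lemma on_circle O P : on_conic (circle O (dist2 P O)) P.
Proof. by apply/on_conicE; rewrite cform_circle /dist2 /dot /vsub /=; ring. Qed.

Lemma circum_coef_circle A B C O : circumcenter A B C O ->
  circum_coef (circle O (dist2 A O)) A B C = scale3 (-1) (sides A B C).
Proof.
move=> [hB hC]; rewrite /circum_coef !cform_circle /scale3 /sides /=.
by rewrite -[dist2 B O]hB -[dist2 C O]hC /dist2; congr (_, _, _); ring.
Qed.

Lemma conjugate_bary A B C O X Y : circumcenter A B C O ->
  conjugate_wrt_circle O (dist2 A O) X Y ->
  ccform (sides A B C) (bary A B C (hom X)) (bary A B C (hom Y)) = 0.
Proof.
move=> hO hXY; have [hB hC] := hO.
have onB : on_conic (circle O (dist2 A O)) B.
  by rewrite (_ : dist2 A O = dist2 B O) //; apply: on_circle.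
have onC : on_conic (circle O (dist2 A O)) C.
  by rewrite (_ : dist2 A O = dist2 C O) //; apply: on_circle.
have := cform_bary (hom X) (hom Y) (on_circle O A) onB onC.
rewrite circum_coef_circle // ccformZl cform_circle.
rewrite (_ : dist2 X O + dist2 Y O - dist2 X Y = 2 * dot (vsub Y O) (vsub X O)); last first.
  by rewrite /dist2 /dot /vsub /=; ring.
by rewrite hXY subrr mulr0 => /esym/eqP; rewrite mulN1r oppr_eq0 => /eqP.
Qed.

End Plane.

Theorem corollary3p2p1 (R : rcfType) (A B C O X Y X' Y' : point R) :
  ~ collinear A B C ->
  circumcenter A B C O ->
  conjugate_wrt_circle O (dot (vsub A O) (vsub A O)) X Y ->
  (* X, Y are not on the sidelines of ABC, so that their isogonal conjugates are
     defined and distinct from the vertices *)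
  ~ collinear X B C -> ~ collinear X C A -> ~ collinear X A B ->
  ~ collinear Y B C -> ~ collinear Y C A -> ~ collinear Y A B ->
  isogonal_conjugate A B C X X' ->
  isogonal_conjugate A B C Y Y' ->
  forall (Q : conic R) (Z : hpoint R),
    nondeg_coeffs Q ->
    on_conic Q A -> on_conic Q B -> on_conic Q C -> on_conic Q X' -> on_conic Q Y' ->
    conic_center Q Z ->
    on_line_h X' Y' Z.
Proof.
move=> nABC hO hXY nXa nXb nXc nYa nYb nYc isoX isoY Q Z nd QA QB QC QX QY hZ.
have x0 := prod3_bary_neq0 nXa nXb nXc.
have y0 := prod3_bary_neq0 nYa nYb nYc.
have [t x'E] := isogonal_conjugate_bary nABC x0 isoX.
have [t' y'E] := isogonal_conjugate_bary nABC y0 isoY.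
apply: (on_line_h_bary nABC).
apply: (det3_isogZ_cc_center _ (prod3_sides_neq0 nABC) x0 y0 (conjugate_bary hO hXY) x'E y'E
  (sum3_bary_neq0 _ nABC) (sum3_bary_neq0 _ nABC) (circum_coef_neq0 nABC nd QA QB QC)
  (on_conic_bary QA QB QC QX) (on_conic_bary QA QB QC QY) (is_cc_center_bary QA QB QC hZ)).
by rewrite pnatr_eq0.
Qed.
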